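(* Let $B$ be a finite set with $|B|\ge 2$ and let $f$ be an $\mathsf{E}$-shop on $B$, with $b\in B$ such that $b\in f(x)$ for all $x\in B$. Then $\langle f\rangle$ contains an $\mathsf{E}$-shop $g$ for which there is a partition of $B$ into sets $B',B''$ with $B'$ non-empty such that (1) $g(x)\supseteq\{x,b\}$ for all $x\in B'$; (2) $g(x)\supseteq\{b\}$ for all $x\in B''$; (3) for every $y\in B$ there exists $x\in B'$ with $y\in g(x)$.
   Context: A shop on $B$ is a map $f:B\to\mathcal{P}(B)\setminus\{\emptyset\}$ such that every $y\in B$ lies in $f(x)$ for some $x\in B$. An $\mathsf{E}$-shop is a shop $f$ for which some $b\in B$ satisfies $b\in f(x)$ for all $x\in B$. The identity shop is $x\mapsto\{x\}$; composition is $(g\circ f)(x)=\{z:\exists y\ (y\in f(x)\wedge z\in g(y))\}$; $f$ is a sub-shop of $g$ if $f(x)\subseteq g(x)$ for all $x$. A down-she-monoid (DSM) on $B$ is a set of shops on $B$ containing the identity, closed under composition and under taking sub-shops (that are shops). $\langle f\rangle$ denotes the smallest DSM containing $f$. *)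

From mathcomp Require Import all_boot.
Set Implicit Arguments. Unset Strict Implicit. Unset Printing Implicit Defensive.

Section Shops.
Variable B : finType.

Definition is_shop (f : B -> {set B}) : Prop :=
  (forall x, f x != set0) /\ (forall y, exists x, y \in f x).

Definition is_Eshop (f : B -> {set B}) : Prop :=
  is_shop f /\ exists b, forall x, b \in f x.

Definition id_shop : B -> {set B} := fun x => [set x].

Definition shop_comp (g f : B -> {set B}) : B -> {set B} :=
  fun x => [set z | [exists y, (y \in f x) && (z \in g y)]].

Definition sub_shop (f g : B -> {set B}) : Prop := forall x, f x \subset g x.

Definition is_DSM (M : (B -> {set B}) -> Prop) : Prop :=
  (forall f, M f -> is_shop f) /\
  M id_shop /\
  (forall f g, M f -> M g -> M (shop_comp g f)) /\
  (forall f g, M g -> is_shop f -> sub_shop f g -> M f).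

(* <f> : the smallest DSM containing f (intersection of all DSMs containing f). *)
Definition gen_DSM (f : B -> {set B}) : (B -> {set B}) -> Prop :=
  fun g => forall M, is_DSM M -> M f -> M g.

End Shops.

From mathcomp Require Import all_boot.
Set Implicit Arguments. Unset Strict Implicit. Unset Printing Implicit Defensive.

(* Some power g = f^N with N > 0 is idempotent, because the powers of f live
   in a finite monoid.  As a relation g is then transitive, so every y has a
   g-predecessor x with x in g x (follow predecessors until the set of
   predecessors stops shrinking).  Take B' to be the set of such loop points
   and B'' its complement; b lies in every g x since it lies in every f x. *)

Lemma iter_period (T : Type) (h : T -> T) (t : T) i p m n :
  iter (p + i) h t = iter i h t -> i <= n -> iter (m * p + n) h t = iter n h t.
Proof.
move=> periodic le_in; rewrite -(subnK le_in) addnCA !iterD.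
congr (iter _ h _); elim: m => [|m IH]; first by rewrite mul0n.
by rewrite mulSn iterD IH -iterD.
Qed.

Lemma iter_idempotent (T : finType) (h : T -> T) (t : T) :
  exists2 N, 0 < N & iter (N + N) h t = iter N h t.
Proof.
pose u (k : 'I_#|T|.+1) := iter k h t.
have /injectivePn[i [j neq_ij eq_uij]] : ~~ injectiveb u.
  by apply/injectiveP => /leq_card; rewrite card_ord ltnn.
wlog lt_ij : i j neq_ij eq_uij / i < j.
  move=> W; case: (ltngtP i j) => [|lt_ji|/val_inj eq_ij]; first exact: W.
  - by apply: (W j i) => //; rewrite eq_sym.
  - by rewrite eq_ij eqxx in neq_ij.
have p_gt0 : 0 < j - i by rewrite subn_gt0.
have periodic : iter ((j - i) + i) h t = iter i h t.
  by rewrite subnK ?(ltnW lt_ij).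
exists (j * (j - i)); first by rewrite muln_gt0 p_gt0 (leq_ltn_trans _ lt_ij).
apply: iter_period periodic _.
exact: leq_trans (ltnW lt_ij) (leq_pmulr _ p_gt0).
Qed.

Section ShopPowers.
Variable B : finType.
Implicit Types (f g h : B -> {set B}) (x y z : B).

Lemma mem_shop_comp g h x y z : y \in h x -> z \in g y -> z \in shop_comp g h x.
Proof. by move=> hxy gyz; rewrite inE; apply/existsP; exists y; rewrite hxy. Qed.

Lemma shop_comp_shop g h : is_shop h -> is_shop g -> is_shop (shop_comp g h).
Proof.
move=> [h_neq0 h_cover] [g_neq0 g_cover]; split.
  move=> x; have [y hxy] := set0Pn _ (h_neq0 x); have [z gyz] := set0Pn _ (g_neq0 y).
  by apply/set0Pn; exists z; apply: mem_shop_comp hxy gyz.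
move=> z; have [y gyz] := g_cover z; have [x hxy] := h_cover y.
by exists x; apply: mem_shop_comp hxy gyz.
Qed.

Lemma id_shop_shop : is_shop (@id_shop B).
Proof.
by split=> [x|y]; [apply/set0Pn; exists x | exists y]; rewrite /id_shop inE.
Qed.

Lemma shops_DSM : is_DSM (@is_shop B).
Proof.
do 2!split=> //; first exact: id_shop_shop.
by split=> // g h shop_g shop_h; apply: shop_comp_shop.
Qed.

Lemma gen_DSM_shop f g : is_shop f -> gen_DSM f g -> is_shop g.
Proof. by move=> shop_f gen_g; apply: gen_g shops_DSM shop_f. Qed.

Lemma shop_comp_Eshop g h b x :
  is_shop h -> (forall z, b \in g z) -> b \in shop_comp g h x.
Proof.
by move=> [h_neq0 _] g_b; have [y hxy] := set0Pn _ (h_neq0 x); apply: mem_shop_comp hxy (g_b y).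
Qed.

Definition shop_pow f n : B -> {set B} := iter n (shop_comp f) (@id_shop B).

Lemma gen_DSM_pow f n : gen_DSM f (shop_pow f n).
Proof. by move=> M [_ [M_id [M_comp _]]] M_f; elim: n => //= n IH; exact: M_comp IH M_f. Qed.

Lemma shop_pow_trans f m n x y z :
  y \in shop_pow f m x -> z \in shop_pow f n y -> z \in shop_pow f (n + m) x.
Proof.
move=> mxy; elim: n z => [|n IH] z /=; first by rewrite /id_shop inE => /eqP->.
rewrite inE => /existsP[w /andP[nyw fwz]].
exact: mem_shop_comp (IH _ nyw) fwz.
Qed.

Lemma shop_pow_idempotent f :
  exists2 N, 0 < N & forall x, shop_pow f (N + N) x = shop_pow f N x.
Proof.
pose step (F : {ffun B -> {set B}}) := [ffun x => shop_comp f F x].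
have pow_ffun n : iter n step [ffun x => [set x]] = [ffun x => shop_pow f n x].
  elim: n => [|n IH]; first by apply/ffunP => x; rewrite !ffunE.
  rewrite iterS IH; apply/ffunP => x; rewrite !ffunE; apply/setP => z.
  by rewrite /= !inE; apply: eq_existsb => y; rewrite ffunE.
have [N N_gt0 idemN] := iter_idempotent step [ffun x => [set x]].
by exists N => // x; move/ffunP: idemN => /(_ x); rewrite !pow_ffun !ffunE.
Qed.

Lemma transitive_shop_loop g :
  is_shop g -> (forall x y z, y \in g x -> z \in g y -> z \in g x) ->
  forall y, exists2 x, x \in g x & y \in g x.
Proof.
move=> [_ g_cover] g_trans y; have [x0 gx0y] := g_cover y.
pose preds x := [set w | x \in g w].
case: (@arg_minnP _ x0 (fun x => y \in g x) (fun x => #|preds x|) gx0y) => x gxy min_x.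
have [w gwx] := g_cover x.
exists w; last exact: g_trans gwx gxy.
apply/negPn/negP => ngww.
have : #|preds w| < #|preds x|.
  apply/proper_card/properP; split; last by exists w; rewrite !inE.
  by apply/subsetP => u; rewrite !inE => guw; apply: g_trans guw gwx.
by rewrite ltnNge min_x //; apply: g_trans gwx gxy.
Qed.

End ShopPowers.

Theorem lemma3p6 (B : finType) (f : B -> {set B}) (b : B) :
  1 < #|B| ->
  is_shop f ->
  (forall x, b \in f x) ->
  exists g : B -> {set B},
    gen_DSM f g /\ is_Eshop g /\
    exists B' B'' : {set B},
      B' :&: B'' = set0 /\ B' :|: B'' = setT /\ B' != set0 /\
      (forall x, x \in B' -> [set x; b] \subset g x) /\
      (forall x, x \in B'' -> [set b] \subset g x) /\
      (forall y, exists2 x, x \in B' & y \in g x).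
Proof.
move=> _ shop_f f_b.
have [N N_gt0 idemN] := shop_pow_idempotent f.
pose g := shop_pow f N.
have shop_g : is_shop g := gen_DSM_shop shop_f (gen_DSM_pow N).
have g_trans x y z : y \in g x -> z \in g y -> z \in g x.
  by move=> gxy gyz; rewrite /g -idemN; apply: shop_pow_trans gxy gyz.
have g_b x : b \in g x.
  rewrite /g /shop_pow -(prednK N_gt0) iterS.
  exact: shop_comp_Eshop (gen_DSM_shop shop_f (gen_DSM_pow N.-1)) f_b.
have g_loop := transitive_shop_loop shop_g g_trans.
exists g; split; first exact: gen_DSM_pow.
split; first by split; last exists b.
exists [set x | x \in g x], (~: [set x | x \in g x]).
split; first exact: setICr.
split; first exact: setUCr.
split; first by have [x gxx _] := g_loop b; apply/set0Pn; exists x; rewrite inE.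
split; first by move=> x; rewrite inE => gxx; rewrite subUset !sub1set gxx g_b.
split; first by move=> x _; rewrite sub1set.
by move=> y; have [x gxx gxy] := g_loop y; exists x; rewrite ?inE.
Qed.
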